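(* Let $f\in\omega^{\subset\omega}$, let $n,m\geq 1$, let $U$ be an $(n+m-1)$-branching set of extensions of $f$, and let $R\subseteq U$. Then either there is an $n$-branching set of extensions of $f$ contained in $R$, or there is an $m$-branching set of extensions of $f$ contained in $U\setminus R$.
   Context: $\omega^{\subset\omega}$ is the set of partial functions from $\omega$ to $\omega$ with finite domain. For $f\in\omega^{\subset\omega}$, an $n$-branching set of extensions of $f$ of length $k$ is defined by induction on $k$: of length $1$, it is a set $U$ of $n$ functions such that for some fixed $x\notin\operatorname{dom}(f)$ each $g\in U$ satisfies $f\subseteq g$ and $\operatorname{dom}(g)=\operatorname{dom}(f)\cup\{x\}$; if $U_0$ is an $n$-branching set of extensions of $f$ of length $k$ and for each $g\in U_0$, $U_g$ is an $n$-branching set of extensions of $g$ of length $1$, then $\bigcup_{g\in U_0}U_g$ is an $n$-branching set of extensions of $f$ of length $k+1$. An $n$-branching set of extensions is one of some length $k\geq1$. *)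

From mathcomp Require Import all_boot.
From mathcomp Require Import finmap.
Set Implicit Arguments. Unset Strict Implicit. Unset Printing Implicit Defensive.
Local Open Scope fset_scope.
Local Open Scope fmap_scope.

(* omega^{subset omega}: partial functions nat -> nat with finite domain *)
Definition pfun := {fmap nat -> nat}.

Definition pf_extends (f g : pfun) : Prop :=
  forall x, x \in domf f -> g.[? x] = f.[? x].

Inductive branching (n : nat) : pfun -> nat -> {fset pfun} -> Prop :=
| branching_one (f : pfun) (x : nat) (U : {fset pfun}) :
    x \notin domf f ->
    #|` U| = n ->
    (forall g, g \in U -> pf_extends f g /\ domf g = x |` domf f) ->
    branching n f 1 U
| branching_succ (f : pfun) (k : nat) (U0 : {fset pfun}) (Ug : pfun -> {fset pfun}) :
    branching n f k U0 ->
    (forall g, g \in U0 -> branching n g 1 (Ug g)) ->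
    branching n f k.+1 (\bigcup_(g <- U0) Ug g).

Definition is_branching (n : nat) (f : pfun) (U : {fset pfun}) : Prop :=
  exists k, 1 <= k /\ branching n f k U.

From mathcomp Require Import all_boot.
From mathcomp Require Import finmap.
From mathcomp Require Import zify.
Local Open Scope fset_scope.
Set Implicit Arguments.
Unset Strict Implicit.

(* Induction on the length, proving the stronger statement that the branching
   set found has the same length as U.  At length 1, U has n + m - 1 elements,
   so by pigeonhole either n of them lie in R or m of them lie outside R.
   At length k + 1, call a node g of the length-k skeleton U0 good when its
   one-step fan U_g meets R in at least n elements; applying the induction
   hypothesis to the good nodes yields either an n-branching set of good nodes,
   above each of which we keep n fan elements in R, or an m-branching set of
   bad nodes, above each of which at least m fan elements avoid R. *)

Definition fset_take (T : choiceType) (p : nat) (A : {fset T}) : {fset T} :=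
  [fset x in take p (enum_fset A)].

Lemma fset_take_sub (T : choiceType) p (A : {fset T}) : fset_take p A `<=` A.
Proof. by apply/fsubsetP=> x; rewrite in_fset /= => /mem_take. Qed.

Lemma card_fset_take (T : choiceType) p (A : {fset T}) :
  p <= #|` A| -> #|` fset_take p A| = p.
Proof.
by move=> le_pA; rewrite card_fseq undup_id ?size_takel // take_uniq // fset_uniq.
Qed.

Lemma card_fsetD_pigeonhole (T : choiceType) n m (A R : {fset T}) :
  #|` A| = n + m - 1 -> #|` A `&` R| < n -> m <= #|` A `\` R|.
Proof. by move=> cardA; have := cardfsID R A; lia. Qed.

Lemma branching_length_gt0 N f k U : branching N f k U -> 0 < k.
Proof. by case. Qed.

Lemma branching1P N f U :
  branching N f 1 U <->
  exists2 x, x \notin domf f &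
    #|` U| = N /\ (forall g, g \in U -> pf_extends f g /\ domf g = x |` domf f).
Proof.
split=> [bU | [x fx [cardU extU]]]; last exact: branching_one fx cardU extU.
inversion bU as [? x ? fx cardU extU|? ? ? ? bU0]; first by exists x.
by have := branching_length_gt0 bU0.
Qed.

Lemma branching1_card N f U : branching N f 1 U -> #|` U| = N.
Proof. by case/branching1P=> x _ []. Qed.

Lemma branching1_sub N f U V : branching N f 1 U -> V `<=` U ->
  branching #|` V| f 1 V.
Proof.
case/branching1P=> x fx [_ extU] sVU; apply/branching1P; exists x => //.
by split=> // g /(fsubsetP sVU); apply: extU.
Qed.

Lemma branching1_take N p f U S : branching N f 1 U -> S `<=` U -> p <= #|` S| ->
  branching p f 1 (fset_take p S).
Proof.
move=> bU sSU le_pS; rewrite -{1}(card_fset_take le_pS); apply: branching1_sub bU _.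
exact: fsubset_trans (fset_take_sub _ _) sSU.
Qed.

Lemma branching_succ_take N p f k V0 (Ug Sg : pfun -> {fset pfun}) :
  branching p f k V0 ->
  (forall g, g \in V0 -> [/\ branching N g 1 (Ug g), Sg g `<=` Ug g & p <= #|` Sg g|]) ->
  exists2 V, V `<=` \bigcup_(g <- V0) Sg g & branching p f k.+1 V.
Proof.
move=> bV0 fanV0; exists (\bigcup_(g <- V0) fset_take p (Sg g)).
  apply/bigfcupsP=> g gV0 _; apply: fsubset_trans (fset_take_sub _ _) _.
  exact: bigfcup_sup.
apply: branching_succ bV0 _ => g /fanV0 [bUg sSU le_pS].
exact: branching1_take bUg sSU le_pS.
Qed.

Lemma branching_split n m f k U : branching (n + m - 1) f k U ->
  forall R : {fset pfun},
  (exists2 V, V `<=` R & branching n f k V) \/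
  (exists2 W, W `<=` U `\` R & branching m f k W).
Proof.
elim=> {f k U} [f x U fx cardU extU | f k U0 Ug _ IH bUg _] R.
  have bU : branching (n + m - 1) f 1 U by exact: branching_one fx cardU extU.
  have [le_nI | lt_In] := leqP n #|` U `&` R|.
    left; exists (fset_take n (U `&` R)).
      2: exact: branching1_take bU (fsubsetIl _ _) le_nI.
    exact: fsubset_trans (fset_take_sub _ _) (fsubsetIr _ _).
  have le_mD := card_fsetD_pigeonhole cardU lt_In.
  right; exists (fset_take m (U `\` R)); first exact: fset_take_sub.
  exact: branching1_take bU (fsubsetDl _ _) le_mD.
pose good := [fset g in U0 | n <= #|` Ug g `&` R|].
have [[V0 sV0good bV0] | [W0 sW0bad bW0]] := IH good.
  have fanV0 g : g \in V0 ->
      [/\ branching (n + m - 1) g 1 (Ug g), Ug g `&` R `<=` Ug g & n <= #|` Ug g `&` R|].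
    move=> /(fsubsetP sV0good); rewrite in_fset /= => /andP[gU0 le_nI].
    by split; [exact: bUg | exact: fsubsetIl |].
  have [V sV bV] := branching_succ_take bV0 fanV0.
  left; exists V => //; apply: fsubset_trans sV _.
  by apply/bigfcupsP=> g _ _; exact: fsubsetIr.
have fanW0 g : g \in W0 ->
    [/\ branching (n + m - 1) g 1 (Ug g), Ug g `\` R `<=` Ug g & m <= #|` Ug g `\` R|].
  move=> /(fsubsetP sW0bad) /fsetDP[gU0]; rewrite !inE gU0 /= -ltnNge => lt_In.
  split; [exact: bUg | exact: fsubsetDl |].
  exact: card_fsetD_pigeonhole (branching1_card (bUg g gU0)) lt_In.
have [W sW bW] := branching_succ_take bW0 fanW0.
right; exists W => //; apply: fsubset_trans sW _.
apply/bigfcupsP=> g gW0 _; apply: fsetSD; apply: bigfcup_sup => //.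
by case/fsetDP: (fsubsetP sW0bad g gW0).
Qed.

Theorem mainTheorem7 (f : pfun) (n m : nat) (U R : {fset pfun}) :
  1 <= n -> 1 <= m ->
  is_branching (n + m - 1) f U ->
  R `<=` U ->
  (exists V : {fset pfun}, V `<=` R /\ is_branching n f V) \/
  (exists W : {fset pfun}, W `<=` U `\` R /\ is_branching m f W).
Proof.
move=> _ _ [k [k_gt0 bU]] _.
have [[V sVR bV] | [W sWUR bW]] := branching_split bU R.
  by left; exists V; split=> //; exists k.
by right; exists W; split=> //; exists k.
Qed.
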